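(* Let $\mathcal Y=\{1,\dots,n\}$, $c\in(0,1)$ constant, $\mathcal H_{\rm all}$, $\mathcal R_{\rm all}$ the families of all measurable functions $\mathcal X\times\mathcal Y\to\mathbb R$ and $\mathcal X\to\mathbb R$. Let $\ell$ be a multi-class surrogate loss and $\Phi$ non-increasing with $\Phi(t)\ge1_{t\le0}$. Assume there are non-decreasing concave $\Gamma_1,\Gamma_2$ such that for all distributions, all $h\in\mathcal H_{\rm all}$ and $r\in\mathcal R_{\rm all}$: $\mathcal E_{\ell_{0-1}}(h)-\mathcal E^*_{\ell_{0-1}}(\mathcal H_{\rm all})\le\Gamma_1(\mathcal E_\ell(h)-\mathcal E^*_\ell(\mathcal H_{\rm all}))$ (distributions over $\mathcal X\times\mathcal Y$) and $\mathcal E_{\ell^{\rm binary}_{0-1}}(r)-\mathcal E^*_{\ell^{\rm binary}_{0-1}}(\mathcal R_{\rm all})\le\Gamma_2(\mathcal E_\Phi(r)-\mathcal E^*_\Phi(\mathcal R_{\rm all}))$ (distributions over $\mathcal X\times\{-1,+1\}$). Then for all $h\in\mathcal H_{\rm all}$, $r\in\mathcal R_{\rm all}$ and any distribution over $\mathcal X\times\mathcal Y$, $$\mathcal E_{\mathsf L_{\rm abs}}(h,r)-\mathcal E^*_{\mathsf L_{\rm abs}}(\mathcal H_{\rm all},\mathcal R_{\rm all})\le\Gamma_1\big(\mathcal E_\ell(h)-\mathcal E^*_\ell(\mathcal H_{\rm all})\big)+(1+c)\Gamma_2\Big(\big(\mathcal E_{\ell_{\Phi,h}}(r)-\mathcal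 E^*_{\ell_{\Phi,h}}(\mathcal R_{\rm all})\big)/c\Big),$$ where, when $\Gamma_2$ is linear, the bound holds with the constant factors $(1+c)$ and $1/c$ removed.
   Context: $\mathsf h(x)=\arg\max_y h(x,y)$ with fixed tie-breaking. $\ell_{0-1}(h,x,y)=1_{\mathsf h(x)\ne y}$; $\mathsf L_{\rm abs}(h,r,x,y)=1_{\mathsf h(x)\ne y}1_{r(x)>0}+c\,1_{r(x)\le0}$; $\ell_{\Phi,h}(r,x,y)=1_{\mathsf h(x)\ne y}\Phi(-r(x))+c\,\Phi(r(x))$. For $y\in\{-1,+1\}$: $\ell^{\rm binary}_{0-1}(r,x,y)=1_{y\ne\mathrm{sign}(r(x))}$, $\mathrm{sign}(t)=1_{t>0}-1_{t\le0}$, $\Phi$-loss $\Phi(yr(x))$. $\mathcal E$ denotes expected loss and $\mathcal E^*$ its infimum over the indicated set(s). *)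

From HB Require Import structures.
From mathcomp Require Import all_boot all_order all_algebra.
From mathcomp Require Import all_classical all_reals all_analysis.
Set Implicit Arguments. Unset Strict Implicit. Unset Printing Implicit Defensive.
Import Order.TTheory GRing.Theory Num.Theory.
Local Open Scope classical_set_scope.
Local Open Scope ring_scope.

(* The label set Y = {1,...,n+1} is represented by 'I_n.+1, equipped with the
   discrete sigma-algebra (all subsets measurable). *)
HB.instance Definition _ (n : nat) := isPointed.Build 'I_n.+1 ord0.
HB.instance Definition _ (n : nat) :=
  @isMeasurable.Build default_measure_display 'I_n.+1 discrete_measurable
    (@discrete_measurable0 _) (@discrete_measurableC _) (@discrete_measurableU _).

Section defs.
Context (R : realType) (d : measure_display) (X : measurableType d) (n : nat).
Local Notation Y := ('I_n.+1).

Definition Hall : set (X * Y -> R) := [set h | measurable_fun setT h].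
Definition Rall : set (X -> R) := [set r | measurable_fun setT r].

(* predictor  h(x) = argmax_y h(x,y) with a fixed tie-breaking *)
Definition hpred (h : X * Y -> R) (x : X) : Y :=
  [arg max_(y > ord0) h (x, y)]%O.

Definition loss01 (h : X * Y -> R) (x : X) (y : Y) : R :=
  (hpred h x != y)%:R.

Definition Labs (c : R) (h : X * Y -> R) (r : X -> R) (x : X) (y : Y) : R :=
  (hpred h x != y)%:R * ((0 < r x)%R : bool)%:R + c * ((r x <= 0)%R : bool)%:R.

Definition lPhih (c : R) (Phi : R -> R) (h : X * Y -> R) (r : X -> R)
  (x : X) (y : Y) : R :=
  (hpred h x != y)%:R * Phi (- r x) + c * Phi (r x).

End defs.

Section bdefs.
Context (R : realType) (d : measure_display) (X : measurableType d).
(* binary labels {-1,+1} represented by bool: true = +1, false = -1;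
   sign(t) = +1 iff t > 0 *)
Definition sgnb (t : R) : bool := 0 < t.
Definition lab_val (y : bool) : R := if y then 1 else -1.
Definition bin01 (r : X -> R) (x : X) (y : bool) : R := (y != sgnb (r x))%:R.
Definition binPhi (Phi : R -> R) (r : X -> R) (x : X) (y : bool) : R :=
  Phi (lab_val y * r x).
End bdefs.

Definition Risk (R : realType) (d1 d2 : measure_display)
  (X : measurableType d1) (Y : measurableType d2)
  (P : probability (X * Y)%type R) (f : X -> Y -> R) : \bar R :=
  (\int[P]_z (f z.1 z.2)%:E)%E.

(* excess  E - E^*  (losses are nonnegative, so E^* >= 0; when E = +oo the
   excess is +oo) *)
Definition excess (R : realType) (e s : \bar R) : \bar R :=
  if e == +oo%E then +oo%E else (e - s)%E.

(* extension of Gamma : R -> R to the (nonnegative) extended reals,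
   Gamma(+oo) = +oo, i.e. the bound is vacuous when the surrogate excess is
   infinite *)
Definition Gext (R : realType) (G : R -> R) (e : \bar R) : \bar R :=
  match e with
  | EFin r => (G r)%:E
  | +oo%E => +oo%E
  | -oo%E => -oo%E
  end.

Definition nondecr0 (R : realType) (G : R -> R) : Prop :=
  forall s t : R, 0 <= s -> s <= t -> G s <= G t.
Definition concave0 (R : realType) (G : R -> R) : Prop :=
  forall (s t l : R), 0 <= s -> 0 <= t -> 0 <= l <= 1 ->
    l * G s + (1 - l) * G t <= G (l * s + (1 - l) * t).

From HB Require Import structures.
From mathcomp Require Import all_boot all_order all_algebra.
From mathcomp Require Import all_classical all_reals all_analysis.
From mathcomp Require Import measurable_realfun.
From mathcomp Require Import lra.
Import Order.TTheory GRing.Theory Num.Theory.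
Local Open Scope classical_set_scope.
Local Open Scope ring_scope.

(** Fix [h] and let [Z = c + P(h errs)], so that [c <= Z <= 1 + c].  For any
    competitor [(h', r')], the classifier that follows [h'] where [r'] accepts and
    [h] where [r'] abstains satisfies a pointwise identity showing that the
    abstention excess risk of [(h, r)] is at most the excess risk of [r] as a
    rejector for [h] plus the zero-one excess risk of [h]; the latter is bounded
    via [G1].  With [h] fixed, the abstention loss and [lPhih] are [Z] times the
    binary zero-one and [Phi]-losses of [r] for the distribution on
    [X * {-1, +1}] proportional to [c] times the marginal of [P] labelled [+1]
    plus the misclassified part of [P] labelled [-1].  The [G2] bound for that
    distribution gives [Z * G2 (exPhi / Z)], which is at most
    [(1 + c) * G2 (exPhi / c)] since [G2] is non-decreasing, and equals
    [G2 exPhi] when [G2] is linear. *)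

Section excess.
Context {R : realType}.
Local Open Scope ereal_scope.

Lemma excess_fin (e s : \bar R) : e \is a fin_num -> excess e s = e - s.
Proof. by case: e. Qed.

Lemma excess_ge0 (e s : \bar R) : 0 <= s -> s <= e -> 0 <= excess e s.
Proof.
rewrite /excess; case: eqVneq => // eNoo s0 se.
by rewrite sube_ge0 // ge0_fin_numE // (le_lt_trans se) // ltey.
Qed.

Lemma excessZl (k : R) (e s : \bar R) : (0 < k)%R ->
  excess (k%:E * e) (k%:E * s) = k%:E * excess e s.
Proof.
move=> k0; case: e => [e| |]; rewrite /excess /=.
- by rewrite muleBr.
- by rewrite gt0_muley ?lte_fin // eqxx.
- rewrite gt0_muleNy ?lte_fin //=; case: s => [s| |] //=;
    by rewrite ?gt0_muley ?gt0_muleNy ?lte_fin.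
Qed.

Lemma ge0_ereal_inf_fin_num T (A : set T) (f : T -> \bar R) t :
  (forall u, A u -> 0 <= f u) -> A t -> f t \is a fin_num ->
  ereal_inf (f @` A) \is a fin_num.
Proof.
move=> f0 At ft; rewrite ge0_fin_numE; last first.
  by apply: le_ereal_inf_tmp => _ [u Au <-]; exact: f0.
apply: le_lt_trans (_ : f t < +oo); last by rewrite ltey_eq ft.
by apply: ereal_inf_lbound; exists t.
Qed.

Lemma Gext_rescale_le (G : R -> R) (c Z C : R) (x : \bar R) : nondecr0 G ->
  (0 < c <= Z)%R -> (Z <= C)%R -> 0 <= x -> 0 <= Gext G (Z^-1%:E * x) ->
  Z%:E * Gext G (Z^-1%:E * x) <= C%:E * Gext G (x * c^-1%:E).
Proof.
move=> G_nd /andP[c0 cZ] ZC; have Z0 : (0 < Z)%R := lt_le_trans c0 cZ.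
case: x => [x| |] // x0 G0.
- rewrite /= !lee_fin in x0 G0 *.
  have x_le : (Z^-1 * x <= x * c^-1)%R.
    by rewrite mulrC ler_wpM2l // lef_pV2 // posrE.
  have Zx0 : (0 <= Z^-1 * x)%R by rewrite mulr_ge0 // invr_ge0 ltW.
  have g12 := G_nd _ _ Zx0 x_le.
  apply: (le_trans (ler_wpM2r G0 ZC)).
  by rewrite ler_wpM2l // (le_trans (ltW Z0)).
- have Zi0 : (0 < Z^-1)%R by rewrite invr_gt0.
  have ci0 : (0 < c^-1)%R by rewrite invr_gt0.
  rewrite gt0_muley ?gt0_mulye ?lte_fin //=.
  by rewrite !gt0_muley ?lte_fin ?(lt_le_trans Z0).
Qed.

Lemma Gext_linearZl (G : R -> R) (a k : R) (x : \bar R) :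
  (forall t, 0 <= t -> G t = a * t)%R -> (0 < k)%R -> 0 <= x ->
  Gext G (k%:E * x) = k%:E * Gext G x.
Proof.
move=> lin k0; case: x => [x| |] // x0.
- by rewrite /= -!EFinM !lin ?mulr_ge0 ?(ltW k0) // mulrCA.
- by rewrite /= !gt0_muley ?lte_fin.
Qed.

End excess.

Definition excess_risk {R : realType} {d1 d2 : measure_display}
    {X : measurableType d1} {Y : measurableType d2}
    (P : probability (X * Y)%type R) {T : Type} (A : set T)
    (loss : T -> X -> Y -> R) (t : T) :=
  excess (Risk P (loss t)) (ereal_inf [set Risk P (loss u) | u in A]).

Section risk.
Context {R : realType} {d1 d2 : measure_display}
  {X : measurableType d1} {Y : measurableType d2}.
Variable P : probability (X * Y)%type R.
Implicit Types f g : X -> Y -> R.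
Local Notation uncurry f := (fun z : X * Y => f z.1 z.2).

Lemma Risk_ge0 f : (forall x y, 0 <= f x y) -> (0 <= Risk P f)%E.
Proof. by move=> f0; apply: integral_ge0 => z _; rewrite lee_fin. Qed.

Lemma Risk_fin_num f (B : R) : (forall x y, 0 <= f x y <= B) ->
  measurable_fun setT (uncurry f) -> Risk P f \is a fin_num.
Proof.
move=> fB mf; have f0 x y : 0 <= f x y by case/andP: (fB x y).
rewrite ge0_fin_numE ?Risk_ge0 //; apply: (@le_lt_trans _ _ B%:E); last exact: ltry.
have -> : B%:E = (\int[P]_z (cst B%:E) z)%E.
  by rewrite integral_cst // -[LHS]mule1; congr (_ * _)%E; exact/esym/probability_setT.
apply: ge0_le_integral => //; last 2 first; first exact/measurable_EFinP.
all: by move=> z _; rewrite lee_fin; case/andP: (fB z.1 z.2).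
Qed.

Lemma RiskD f g : (forall x y, 0 <= f x y) -> (forall x y, 0 <= g x y) ->
  measurable_fun setT (uncurry f) -> measurable_fun setT (uncurry g) ->
  Risk P (fun x y => f x y + g x y) = (Risk P f + Risk P g)%E.
Proof.
move=> f0 g0 mf mg; rewrite /Risk; under eq_integral do rewrite EFinD.
apply: ge0_integralD => //; try exact/measurable_EFinP.
all: by move=> z _; rewrite lee_fin.
Qed.

Lemma excess_risk_ge0 T (A : set T) (loss : T -> X -> Y -> R) t :
  (forall u x y, 0 <= loss u x y) -> A t -> (0 <= excess_risk P A loss t)%E.
Proof.
move=> l0 At; apply: excess_ge0.
  by apply: le_ereal_inf_tmp => _ [u _ <-]; exact: Risk_ge0.
by apply: ereal_inf_lbound; exists t.
Qed.

End risk.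

Lemma excess_risk_pZl {R : realType} {d1 d2 d3 d4 : measure_display}
    {X1 : measurableType d1} {Y1 : measurableType d2}
    {X2 : measurableType d3} {Y2 : measurableType d4}
    (P1 : probability (X1 * Y1)%type R) (P2 : probability (X2 * Y2)%type R)
    {T : Type} (A : set T) (l1 : T -> X1 -> Y1 -> R) (l2 : T -> X2 -> Y2 -> R) (k : R) t :
  0 < k -> (forall u, A u -> Risk P2 (l2 u) = (k%:E * Risk P1 (l1 u))%E) -> A t ->
  excess_risk P2 A l2 t = (k%:E * excess_risk P1 A l1 t)%E.
Proof.
move=> k0 l12 At; rewrite /excess_risk l12 // -excessZl // -ereal_inf_pZl //.
rewrite image_comp; congr (excess _ (ereal_inf _)).
by apply: eq_imagel => u Au; rewrite /= l12.
Qed.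

Lemma ge0_integral_mrestr {R : realType} {d : measure_display} {T : measurableType d}
    (mu : {measure set T -> \bar R}) (S : set T) (mS : measurable S) (g : T -> \bar R) :
  measurable_fun setT g -> (forall x, 0 <= g x)%E ->
  (\int[mrestr mu mS]_x g x = \int[mu]_(x in S) g x)%E.
Proof.
move=> mg g0; rewrite -(setUv S) (ge0_integral_setU _ mS (measurableC mS)) //.
2: by rewrite setUv.
2: by rewrite /disj_set setICr.
have -> : (\int[mrestr mu mS]_(x in ~` S) g x = 0)%E.
  rewrite (@eq_measure_integral _ _ _ _ mzero) ?integral_measure_zero //.
  move=> A mA AS; change (mu (A `&` S) = 0%E).
  rewrite (_ : A `&` S = set0) ?measure0 //.
  by apply/seteqP; split => x // [/AS].
rewrite adde0; apply: eq_measure_integral => A mA AS.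
by change (mu (A `&` S) = mu A); rewrite setIidl.
Qed.

Lemma mnormalizeE {R : realType} {d : measure_display} {T : measurableType d}
    (mu : {measure set T -> \bar R}) (P : probability T R) (Z : R) A :
  mu setT = Z%:E -> 0 < Z -> mnormalize mu P A = ((Z^-1)%:E * mu A)%E.
Proof. by move=> muZ Z0; rewrite /mnormalize muZ eqe (gt_eqF Z0) /= muleC. Qed.

Section binary_reweighting.
Context {R : realType} {d1 d2 : measure_display}
  {X : measurableType d1} {Y : measurableType d2}.

Lemma measurable_uncurry_bool (F : X -> bool -> R) :
  (forall b, measurable_fun setT (F^~ b)) ->
  measurable_fun setT (fun z : X * bool => F z.1 z.2).
Proof.
move=> mF; rewrite (_ : (fun z => _) = fun z => if z.2 then F z.1 true else F z.1 false).
  by apply: measurable_fun_ifT => //; exact: measurableT_comp (mF _) measurable_fst.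
by apply/funext => -[x []].
Qed.

Lemma Risk_label_mixture (P : probability (X * Y)%type R) (S : set (X * Y))
    (c : R) (F : X -> bool -> R) : measurable S -> 0 <= c ->
  (forall x b, 0 <= F x b) -> (forall b, measurable_fun setT (F^~ b)) ->
  Risk P (fun x y => c * F x true + \1_S (x, y) * F x false) =
  (c%:E * \int[P]_z (F z.1 true)%:E + \int[P]_(z in S) (F z.1 false)%:E)%E.
Proof.
move=> mS c0 F0 mF; have mFz b : measurable_fun setT (fun z : X * Y => F z.1 b).
  exact: measurableT_comp (mF b) measurable_fst.
rewrite /Risk; under eq_integral do rewrite -surjective_pairing EFinD EFinM.
rewrite ge0_integralD //; last 4 first.
- by move=> z _; rewrite lee_fin mulr_ge0.
- by apply/measurable_EFinP; apply: measurable_funM => //; exact: measurable_cst.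
- by move=> z _; rewrite lee_fin mulr_ge0 // indicE.
- by apply/measurable_EFinP; apply: measurable_funM => //; exact: measurable_indic.
congr (_ + _)%E.
  rewrite ge0_integralZl_EFin //; last exact/measurable_EFinP.
  by move=> z _; rewrite lee_fin.
rewrite [RHS]integral_mkcond; apply: eq_integral => z _.
by rewrite /patch indicE; case: ifP => _; rewrite ?mul1r ?mul0r.
Qed.

(* [Q] is the normalization of
   [c (P_X \x \d_true) + (P restricted to S)_X \x \d_false]. *)
Lemma binary_reweighting (P : probability (X * Y)%type R) (S : set (X * Y))
    (c : R) : measurable S -> 0 < c ->
  exists Q : probability (X * bool)%type R, forall F : X -> bool -> R,
    (forall x b, 0 <= F x b) -> (forall b, measurable_fun setT (F^~ b)) ->
    Risk Q F = (((c + fine (P S))^-1)%:E *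
      Risk P (fun x y => c * F x true + \1_S (x, y) * F x false)%R)%E.
Proof.
move=> mS c0.
pose label (b : bool) (z : X * Y) := (z.1, b).
have mlabel b : measurable_fun setT (label b).
  exact: measurable_fun_pair measurable_fst (measurable_cst _).
(* The measure instances of pushforwards and restrictions take the
   measurability proofs as arguments, hence the explicit instance names. *)
pose muT :=
  measure_function_pushforward__canonical__measure_function_Measure P (mlabel true).
pose P_S := measure_function_mrestr__canonical__measure_function_Measure P mS.
pose muF :=
  measure_function_pushforward__canonical__measure_function_Measure P_S (mlabel false).
pose mu := measure_add (mscale (NngNum (ltW c0)) muT) muF.
pose Z := c + fine (P S).
have Z0 : 0 < Z by rewrite ltr_wpDr // fine_ge0 // measure_ge0.
have muZ : mu setT = Z%:E.
  rewrite /mu measure_addE.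
  change (c%:E * P (label true @^-1` setT) + P (label false @^-1` setT `&` S) = Z%:E)%E.
  by rewrite !preimage_setT setTI probability_setT mule1 /Z EFinD fineK ?fin_num_measure.
exists (mnormalize mu (dirac point)) => F F0 mF.
have mFE : measurable_fun setT (fun z : X * bool => (F z.1 z.2)%:E).
  by apply/measurable_EFinP; exact: measurable_uncurry_bool.
have FE0 z : (0 <= (F z.1 z.2)%:E)%E by rewrite lee_fin.
have Zi0 : 0 <= Z^-1 by rewrite invr_ge0 ltW.
rewrite Risk_label_mixture ?(ltW c0) // /Risk.
rewrite (eq_measure_integral (mscale (NngNum Zi0) mu)); last first.
  by move=> A _ _; exact: mnormalizeE muZ Z0.
rewrite ge0_integral_mscale //; congr (_ * _)%E.
rewrite ge0_integral_measure_add // ge0_integral_mscale //.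
rewrite !ge0_integral_pushforward // !preimage_setT (ge0_integral_mrestr _ _ mS) //.
  exact: measurableT_comp mFE (mlabel false).
by move=> z; rewrite lee_fin.
Qed.

End binary_reweighting.

Lemma measurable_natr_bool {R : realType} {d : measure_display} {T : measurableType d}
    (b : T -> bool) :
  measurable_fun setT b -> measurable_fun setT (fun t => (b t)%:R : R).
Proof.
move=> mb; rewrite (_ : (fun t => _) = fun t => if b t then 1 else 0).
  exact: measurable_fun_ifT.
by apply/funext => t; case: (b t).
Qed.

Section losses.
Context {R : realType} {d : measure_display} {X : measurableType d} {n : nat}.
Local Notation Y := 'I_n.+1.
Implicit Types (h : X * Y -> R) (r : X -> R).

Definition score_pattern h x : {ffun Y * Y -> bool} :=
  [ffun p => h (x, p.2) <= h (x, p.1)].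

Definition argmax_of_pattern (M : {ffun Y * Y -> bool}) : Y :=
  odflt ord0 [pick i | [forall j, M (i, j)]].

(* [hpred h x] depends on [x] only through the finitely many score comparisons. *)
Lemma hpred_pattern h x : hpred h x = argmax_of_pattern (score_pattern h x).
Proof.
rewrite /hpred /argmax_of_pattern /Order.arg_max /extremum; congr odflt.
by apply: eq_pick => i /=; apply: eq_forallb => j /=; rewrite ffunE.
Qed.

Lemma measurable_score_pattern h M :
  measurable_fun setT h -> measurable [set x | score_pattern h x = M].
Proof.
move=> mh; rewrite (_ : [set x | _] =
    \bigcap_(p in [set: Y * Y]) [set x | (h (x, p.2) <= h (x, p.1)) = M p]).
  apply: fin_bigcap_measurable; first exact: finite_finset.
  move=> [i j] _; have hi k : measurable_fun setT (fun x => h (x, k)).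
    exact: measurableT_comp mh (measurable_pair2 _).
  have := measurable_fun_ler (hi j) (hi i) measurableT (_ : measurable [set M (i, j)]).
  by rewrite setTI; apply.
apply/seteqP; split => x /=; first by move=> xM p _ /=; rewrite -xM ffunE.
by move=> xM; apply/ffunP => p; rewrite ffunE; exact: xM.
Qed.

Lemma measurable_hpred h : measurable_fun setT h -> measurable_fun setT (hpred h).
Proof.
move=> mh _ B _; rewrite setTI (_ : _ @^-1` B =
    \bigcup_(M in [set M | B (argmax_of_pattern M)]) [set x | score_pattern h x = M]).
  apply: fin_bigcup_measurable; first exact: finite_finset.
  by move=> M _; exact: measurable_score_pattern.
apply/seteqP; split => x /=; last by move=> [M BM xM]; rewrite hpred_pattern xM.
by move=> Bx; exists (score_pattern h x); rewrite //= -hpred_pattern.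
Qed.

Definition misclassified h : set (X * Y) := [set z | hpred h z.1 != z.2].

Lemma measurable_misclassified h :
  measurable_fun setT h -> measurable (misclassified h).
Proof.
move=> mh; rewrite (_ : misclassified h =
    \bigcup_(y in [set: Y]) ((hpred h @^-1` [set~ y]) `*` [set y])).
  apply: fin_bigcup_measurable; first exact: finite_finset.
  move=> y _; apply: measurableX => //.
  by rewrite -[X in measurable X]setTI; exact: measurable_hpred.
apply/seteqP; split => [[x y] /= xy|[x y] [y' _] [/= xy' ->]]; last exact/eqP.
by exists y => //; split => //; apply/eqP.
Qed.

Lemma loss01_indic h x y : loss01 h x y = \1_(misclassified h) (x, y).
Proof.
rewrite /loss01 indicE; case: (boolP (hpred h x != y)) => xy.
  by rewrite mem_set.
by rewrite memNset //=; apply/negP.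
Qed.

Lemma loss01_bounds h x y : 0 <= loss01 h x y <= 1.
Proof. by rewrite /loss01; case: (hpred h x != y); rewrite /= ?lexx ?ler01. Qed.

Lemma measurable_loss01 h :
  measurable_fun setT h -> measurable_fun setT (fun z => loss01 h z.1 z.2).
Proof.
move=> mh; rewrite (_ : (fun z => _) = \1_(misclassified h)).
  by apply: measurable_indic; exact: measurable_misclassified.
by apply/funext => -[x y]; rewrite loss01_indic.
Qed.

Lemma LabsE c h r x y : Labs c h r x y = if 0 < r x then loss01 h x y else c.
Proof.
by rewrite /Labs /loss01; case: ltrP => _ /=; rewrite ?mulr1 ?mulr0 ?addr0 ?add0r ?mul1r.
Qed.

Lemma Labs_bounds c h r x y : 0 <= c -> 0 <= Labs c h r x y <= 1 + c.
Proof.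
move=> c0; have := loss01_bounds h x y; rewrite LabsE; case: ifP => _ /andP[] /=; lra.
Qed.

Lemma lPhih_ge0 c (Phi : R -> R) h r x y : 0 <= c -> (forall t, 0 <= Phi t) ->
  0 <= lPhih c Phi h r x y.
Proof.
move=> c0 Phi0; have := loss01_bounds h x y.
by rewrite /lPhih => /andP[l0 _]; rewrite addr_ge0 ?mulr_ge0.
Qed.

Lemma measurable_fun_pos_fst r : measurable_fun setT r ->
  measurable_fun setT (fun z : X * Y => 0 < r z.1).
Proof.
move=> mr; apply: measurable_fun_ltr; first exact: measurable_cst.
exact: measurableT_comp mr measurable_fst.
Qed.

Lemma measurable_Labs c h r : measurable_fun setT h -> measurable_fun setT r ->
  measurable_fun setT (fun z => Labs c h r z.1 z.2).
Proof.
move=> mh mr; under eq_fun do rewrite LabsE.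
apply: measurable_fun_ifT; [exact: measurable_fun_pos_fst | exact: measurable_loss01 |].
exact: measurable_cst.
Qed.

End losses.

Section abstention.
Context {R : realType} {d : measure_display} {X : measurableType d} {n : nat}.
Local Notation Y := 'I_n.+1.
Variables (P : probability (X * Y)%type R) (c : R).
Implicit Types (h : X * Y -> R) (r : X -> R).

Definition splice r h h' : X * Y -> R := fun z => if 0 < r z.1 then h' z else h z.

Lemma hpred_splice r h h' x :
  hpred (splice r h h') x = if 0 < r x then hpred h' x else hpred h x.
Proof. by rewrite /hpred /splice /=; case: ifP. Qed.

Lemma Labs_splice r h h' x y :
  Labs c h r x y + loss01 (splice r h h') x y = loss01 h x y + Labs c h' r x y.
Proof. by rewrite !LabsE {2}/loss01 hpred_splice; case: ifP => _ //; rewrite addrC. Qed.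

Hypothesis c_ge0 : 0 <= c.

Lemma Risk_Labs_splice r h h' : Hall h -> Hall h' -> Rall r ->
  (Risk P (Labs c h r) + Risk P (loss01 (splice r h h')) =
   Risk P (loss01 h) + Risk P (Labs c h' r))%E.
Proof.
move=> mh mh' mr; have mhh' : Hall (splice r h h').
  by apply: measurable_fun_ifT => //; exact: measurable_fun_pos_fst.
have Labs0 h1 x y : 0 <= Labs c h1 r x y by case/andP: (Labs_bounds c h1 r x y c_ge0).
have loss0 h1 x y : 0 <= loss01 h1 x y by case/andP: (loss01_bounds h1 x y).
rewrite -!RiskD //; try exact: measurable_Labs; try exact: measurable_loss01.
by congr Risk; apply/funext => x; apply/funext => y; rewrite Labs_splice.
Qed.

Lemma Risk_Labs_fin_num h r : Hall h -> Rall r -> Risk P (Labs c h r) \is a fin_num.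
Proof.
move=> mh mr; apply: (Risk_fin_num P _ (1 + c)); last exact: measurable_Labs.
by move=> x y; exact: Labs_bounds.
Qed.

Lemma Risk_loss01_fin_num h : Hall h -> Risk P (loss01 h) \is a fin_num.
Proof.
move=> mh; apply: (Risk_fin_num P _ 1); last exact: measurable_loss01.
exact: loss01_bounds.
Qed.

Lemma ereal_inf_Labs_le h : Hall h ->
  (ereal_inf [set Risk P (Labs c h g) | g in @Rall R d X] +
   ereal_inf [set Risk P (loss01 g) | g in @Hall R d X n] <=
   ereal_inf [set Risk P (Labs c hr.1 hr.2) | hr in @Hall R d X n `*` @Rall R d X] +
   Risk P (loss01 h))%E.
Proof.
move=> mh; rewrite -leeBlDr ?Risk_loss01_fin_num //.
apply: le_ereal_inf_tmp => _ [[h' r] [/= mh' mr] <-].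
rewrite leeBlDr ?Risk_loss01_fin_num //= [X in (_ <= X)%E]addeC.
rewrite -(Risk_Labs_splice r h h') //.
apply: leeD; apply: ereal_inf_lbound; first by exists r.
exists (splice r h h') => //.
by apply: measurable_fun_ifT => //; exact: measurable_fun_pos_fst.
Qed.

Lemma excess_Labs_le h r : Hall h -> Rall r ->
  (excess_risk P (@Hall R d X n `*` @Rall R d X) (fun hr => Labs c hr.1 hr.2) (h, r)
   <= excess_risk P (@Rall R d X) (Labs c h) r +
      excess_risk P (@Hall R d X n) (@loss01 R d X n) h)%E.
Proof.
move=> mh mr; have := ereal_inf_Labs_le h mh.
rewrite /excess_risk /= !excess_fin ?Risk_Labs_fin_num ?Risk_loss01_fin_num //.
have Labs0 h' r' x y : 0 <= Labs c h' r' x y.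
  by case/andP: (Labs_bounds c h' r' x y c_ge0).
have loss0 h' x y : 0 <= loss01 h' x y by case/andP: (loss01_bounds h' x y).
have fin_Labs := Risk_Labs_fin_num h r mh mr.
have fin_loss := Risk_loss01_fin_num h mh.
have fin_inf_pair : ereal_inf [set Risk P (Labs c hr.1 hr.2)
    | hr in @Hall R d X n `*` @Rall R d X] \is a fin_num.
  by apply: (ge0_ereal_inf_fin_num _ _ _ (h, r)) => // hr _; exact: Risk_ge0.
have fin_inf_r : ereal_inf [set Risk P (Labs c h g) | g in @Rall R d X] \is a fin_num.
  by apply: (ge0_ereal_inf_fin_num _ _ _ r) => // g _; exact: Risk_ge0.
have fin_inf_h : ereal_inf [set Risk P (loss01 g) | g in @Hall R d X n] \is a fin_num.
  by apply: (ge0_ereal_inf_fin_num _ _ _ h) => // g _; exact: Risk_ge0.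
move: fin_Labs fin_loss fin_inf_pair fin_inf_r fin_inf_h.
move: (Risk P _) (Risk P _) (ereal_inf _) (ereal_inf _) (ereal_inf _).
move=> E01 e I01 IL Lall /fineK<- /fineK<- /fineK<- /fineK<- /fineK<-.
by rewrite -!EFinB -!EFinD !lee_fin; lra.
Qed.

Lemma abstention_binary_reduction h (Phi : R -> R) : 0 < c -> Hall h ->
  measurable_fun setT Phi -> (forall t, 0 <= Phi t) ->
  exists2 Z : R, c <= Z <= 1 + c & exists Q : probability (X * bool)%type R,
    (forall g, Rall g -> Risk Q (bin01 g) = ((Z^-1)%:E * Risk P (Labs c h g))%E) /\
    (forall g, Rall g ->
      Risk Q (binPhi Phi g) = ((Z^-1)%:E * Risk P (lPhih c Phi h g))%E).
Proof.
move=> c0 mh mPhi Phi0; have mS := measurable_misclassified h mh.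
have [Q HQ] := binary_reweighting P _ _ mS c0.
exists (c + fine (P (misclassified h))).
  have PS0 : 0 <= fine (P (misclassified h)) by rewrite fine_ge0 // measure_ge0.
  have PS1 : fine (P (misclassified h)) <= 1.
    by rewrite -lee_fin fineK ?fin_num_measure ?probability_le1.
  by apply/andP; split; lra.
exists Q; split => g mg; rewrite HQ //.
- congr (_ * Risk P _)%E; apply/funext => x; apply/funext => y.
  rewrite -loss01_indic LabsE /bin01 /sgnb.
  by case: ltrP => _ /=; rewrite ?mulr0 ?mulr1 ?add0r ?addr0.
- move=> b; apply: measurable_natr_bool.
  have mpos : measurable_fun setT (fun x => 0 < g x).
    exact: measurable_fun_ltr (measurable_cst _) mg.
  by case: b; do ?apply: measurable_neg.
- congr (_ * Risk P _)%E; apply/funext => x; apply/funext => y.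
  by rewrite -loss01_indic /lPhih /binPhi /lab_val mul1r mulN1r addrC.
- by move=> x b; rewrite /binPhi.
- by move=> b; apply: measurableT_comp mPhi _; apply: measurable_funM.
Qed.

Lemma excess_rejector_le h r (Phi G : R -> R) : 0 < c -> Hall h -> Rall r ->
  measurable_fun setT Phi -> (forall t, 0 <= Phi t) ->
  (forall (Q : probability (X * bool)%type R) r', Rall r' ->
    (excess_risk Q (@Rall R d X) (@bin01 R d X) r' <=
     Gext G (excess_risk Q (@Rall R d X) (binPhi Phi) r'))%E) ->
  let exPhi := excess_risk P (@Rall R d X) (lPhih c Phi h) r in
  exists2 Z : R, c <= Z <= 1 + c &
    (0 <= Gext G ((Z^-1)%:E * exPhi))%E /\
    (excess_risk P (@Rall R d X) (Labs c h) r <= Z%:E * Gext G ((Z^-1)%:E * exPhi))%E.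
Proof.
move=> c0 mh mr mPhi Phi0 HG exPhi.
have [Z /andP[cZ Zc] [Q [Q01 QPhi]]] :=
  abstention_binary_reduction h Phi c0 mh mPhi Phi0.
have Z0 : 0 < Z := lt_le_trans c0 cZ.
have Zi0 : 0 < Z^-1 by rewrite invr_gt0.
have bin01_ge0 (g : X -> R) x b : 0 <= bin01 g x b by rewrite /bin01; case: (_ != _).
have HQ := HG Q r mr.
rewrite (excess_risk_pZl P Q _ _ _ _ _ _ QPhi mr) // -/exPhi in HQ.
exists Z; [by rewrite cZ Zc | split].
  by apply: le_trans HQ; apply: excess_risk_ge0.
rewrite -[X in (X <= _)%E]mul1e -(divff (lt0r_neq0 Z0)) EFinM -muleA.
rewrite -(excess_risk_pZl P Q _ _ _ _ _ _ Q01 mr) // lee_pmul2l ?lte_fin //.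
Qed.

End abstention.

Theorem corollary7 (R : realType) (d : measure_display) (X : measurableType d)
  (n : nat) (c : R) (hc : 0 < c < 1)
  (ell : (X * 'I_n.+1 -> R) -> X -> 'I_n.+1 -> R)
  (ell_ge0 : forall h x y, 0 <= ell h x y)
  (ell_meas : forall h, Hall h ->
     measurable_fun setT (fun z : X * 'I_n.+1 => ell h z.1 z.2))
  (Phi : R -> R)
  (Phi_noninc : forall s t : R, s <= t -> Phi t <= Phi s)
  (Phi_ge : forall t : R, ((t <= 0)%R : bool)%:R <= Phi t)
  (G1 G2 : R -> R)
  (G1_nd : nondecr0 G1) (G1_cc : concave0 G1)
  (G2_nd : nondecr0 G2) (G2_cc : concave0 G2)
  (H1 : forall (P : probability (X * 'I_n.+1)%type R) (h : X * 'I_n.+1 -> R),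
     Hall h ->
     (excess (Risk P (loss01 h))
        (ereal_inf [set Risk P (loss01 g) | g in @Hall R d X n])
      <= Gext G1 (excess (Risk P (ell h))
                    (ereal_inf [set Risk P (ell g) | g in @Hall R d X n])))%E)
  (H2 : forall (Q : probability (X * bool)%type R) (r : X -> R),
     Rall r ->
     (excess (Risk Q (bin01 r))
        (ereal_inf [set Risk Q (bin01 g) | g in @Rall R d X])
      <= Gext G2 (excess (Risk Q (binPhi Phi r))
                    (ereal_inf [set Risk Q (binPhi Phi g) | g in @Rall R d X])))%E) :
  forall (P : probability (X * 'I_n.+1)%type R)
         (h : X * 'I_n.+1 -> R) (r : X -> R),
    Hall h -> Rall r ->
    let exLabs := excess (Risk P (Labs c h r))
        (ereal_inf [set Risk P (Labs c hr.1 hr.2) | hr in @Hall R d X n `*` @Rall R d X]) in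
    let exell := excess (Risk P (ell h))
        (ereal_inf [set Risk P (ell g) | g in @Hall R d X n]) in
    let exPhi := excess (Risk P (lPhih c Phi h r))
        (ereal_inf [set Risk P (lPhih c Phi h g) | g in @Rall R d X]) in
    (exLabs <= Gext G1 exell + (1 + c)%:E * Gext G2 (exPhi * (c^-1)%:E))%E
    /\
    ((exists a : R, forall t : R, 0 <= t -> G2 t = a * t) ->
     (exLabs <= Gext G1 exell + Gext G2 exPhi)%E).
Proof.
move=> P h r mh mr exLabs exell exPhi.
have c0 : 0 < c by case/andP: hc.
have Phi0 t : 0 <= Phi t by apply: le_trans (Phi_ge t).
have mPhi : measurable_fun setT Phi.
  by apply: nonincreasing_measurable => // s t; exact: Phi_noninc.
have [Z /andP[cZ Zc] [G2_ge0 Labs_rejector]] :=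
  excess_rejector_le P c h r Phi G2 c0 mh mr mPhi Phi0 H2.
have Z0 : 0 < Z := lt_le_trans c0 cZ.
have exPhi0 : (0 <= exPhi)%E.
  by apply: excess_risk_ge0 => // g x y; apply: lPhih_ge0 => //; exact: ltW.
have Labs_split := excess_Labs_le P c (ltW c0) h r mh mr.
have H1h := H1 P h mh.
split => [|[a lin]]; apply: (le_trans Labs_split); rewrite addeC; apply: leeD => //.
  by apply: le_trans Labs_rejector _; apply: Gext_rescale_le => //; rewrite c0 cZ.
apply: le_trans Labs_rejector _.
by rewrite (Gext_linearZl _ _ _ _ lin) ?invr_gt0 // muleA -EFinM divff ?lt0r_neq0 ?mul1e.
Qed.
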